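(* Let $G$ be a connected partial cube and let $E_1,\ldots,E_d$ be its $\Theta$-classes. For $k\in\{1,\ldots,d\}$ let $U$ and $U'$ be the two connected components of $G-E_k$, and for $e,f\in E(G)$ set $\delta_k(e,f)=1$ if ($e\in E(U)$ and $f\in E(U')$) or ($e\in E(U')$ and $f\in E(U)$), and $\delta_k(e,f)=0$ otherwise. Then for all $e,f\in E(G)$, $$\widehat{d}(e,f)=\sum_{k=1}^{d}\delta_k(e,f).$$
   Context: A partial cube is a graph isomorphic to an isometric subgraph of a hypercube $Q_n$ (i.e. distances in the subgraph equal distances in $Q_n$). The Djoković–Winkler relation $\Theta$ on $E(G)$ is defined by: $xy\,\Theta\,uv$ iff $d(x,u)+d(y,v)\neq d(x,v)+d(y,u)$, where $d$ is the shortest-path distance. In a partial cube $\Theta$ is an equivalence relation; its classes are the $\Theta$-classes, and for each $\Theta$-class $E_k$ the graph $G-E_k$ has exactly two connected components. For edges $e=ab$ and $f=xy$, $\widehat{d}(e,f)=\min\{d(a,x),d(a,y),d(b,x),d(b,y)\}$. *)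

From mathcomp Require Import all_boot.
Set Implicit Arguments. Unset Strict Implicit. Unset Printing Implicit Defensive.

Section Graphs.
Variable T : finType.
Implicit Types (e : rel T) (x y u v a b : T).

Definition simple_graph e := irreflexive e /\ symmetric e.

Definition connected_graph e := forall x y, connect e x y.

Definition walkb e x y (n : nat) : bool :=
  [exists p : n.-tuple T, path e x p && (last x p == y)].

(* shortest-path distance: least n with a walk of length n
   (a shortest walk has length < #|T|; returns #|T| if none exists) *)
Definition dist e x y : nat := find (walkb e x y) (iota 0 #|T|).

Definition hamming n (s t : {ffun 'I_n -> bool}) : nat := #|[set i | s i != t i]|.

Definition partial_cube e :=
  exists n (f : T -> {ffun 'I_n -> bool}),
    forall x y, dist e x y = hamming (f x) (f y).

(* edges are represented as darts (ordered pairs (a,b) with e a b);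
   all notions below are invariant under reversing orientation *)
Definition dart e (p : T * T) : bool := e p.1 p.2.

Definition theta e (p q : T * T) : bool :=
  dist e p.1 q.1 + dist e p.2 q.2 != dist e p.1 q.2 + dist e p.2 q.1.

Definition theta_class e (p : T * T) : {set T * T} :=
  [set q | dart e q & theta e p q].

Definition theta_classes e : {set {set T * T}} :=
  [set theta_class e p | p in [set q | dart e q]].

Definition remove_edges e (K : {set T * T}) : rel T :=
  fun x y => e x y && ((x, y) \notin K).

Definition delta e (K : {set T * T}) (p q : T * T) : nat :=
  [&& p \notin K, q \notin K & ~~ connect (remove_edges e K) p.1 q.1].

Definition dhat e (p q : T * T) : nat :=
  minn (minn (dist e p.1 q.1) (dist e p.1 q.2))
       (minn (dist e p.2 q.1) (dist e p.2 q.2)).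

End Graphs.

From mathcomp Require Import all_boot zify.
Set Implicit Arguments. Unset Strict Implicit. Unset Printing Implicit Defensive.

(* Fix an isometric embedding f of G into Q_n.  Every edge flips exactly one
   coordinate, and the Theta-class of an edge flipping coordinate c is the set
   of all edges flipping c; removing it leaves the two components f x c = true
   and f x c = false (a geodesic between vertices agreeing at c never flips c).
   Hence delta_K(p, q) = 1 for the class of c exactly when c is flipped by
   neither p nor q and the first endpoints p.1 and q.1 differ at c, and
   dhat(p, q), the least of four Hamming distances between the endpoints,
   counts precisely these coordinates. *)

Section Hypercube.
Variable n : nat.
Implicit Types (s t r : {ffun 'I_n -> bool}) (c i j k : 'I_n).

Definition flip_at s s' c := forall k, (s k == s' k) = (k != c).

Lemma flip_atE s s' c : flip_at s s' c ->
  forall k, s' k = (if k == c then ~~ s k else s k).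
Proof. by move=> flip k; have := flip k; case: (k == c); case: (s k); case: (s' k). Qed.

Lemma mem_flip_pair_off s s' r c k : flip_at s s' c -> r \in [:: s; s'] ->
  k != c -> r k = s k.
Proof.
move=> flip; rewrite !inE => /orP[/eqP -> // | /eqP -> k_c].
by rewrite (flip_atE flip) (negbTE k_c).
Qed.

Lemma flip_at_choose s s' c (b : bool) : flip_at s s' c ->
  exists2 r, r \in [:: s; s'] & r c = b.
Proof.
move=> flip; have [<- | s_b] := eqVneq (s c) b; first by exists s; rewrite ?inE ?eqxx.
by exists s'; rewrite ?inE ?eqxx ?orbT // (flip_atE flip) eqxx; case: b s_b; case: (s c).
Qed.

Lemma flip_at_neq s s' c i : flip_at s s' c -> s i != s' i -> i = c.
Proof. by move=> flip; rewrite flip negbK => /eqP. Qed.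

Lemma hammingE s t : hamming s t = \sum_i (s i != t i).
Proof. by rewrite /hamming -sum1_card big_mkcond; apply: eq_bigr => i _; rewrite inE. Qed.

Lemma hamming1_flip_at s s' : hamming s s' = 1 -> exists c, flip_at s s' c.
Proof.
move=> /eqP/cards1P [c def_c]; exists c => k.
by have := congr1 (fun A : {set 'I_n} => k \in A) def_c; rewrite /= !inE => <-; rewrite negbK.
Qed.

Lemma hamming_flip_at s s' t c : flip_at s s' c ->
  hamming s t + (s' c != t c) = hamming s' t + (s c != t c).
Proof.
move=> flip; rewrite !hammingE (bigD1 c) // [X in _ = X + _](bigD1 c) //=.
under [X in _ = _ + X + _]eq_bigr => k k_c do rewrite (flip_atE flip) (negbTE k_c).
lia.
Qed.

Lemma hamming_theta_flip_at s s' t t' i j : flip_at s s' i -> flip_at t t' j ->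
  (hamming s t + hamming s' t' != hamming s t' + hamming s' t) = (i == j).
Proof.
move=> flip_s flip_t; rewrite !hammingE -!big_split /=.
have [i_j | i_j] := eqVneq i j.
  subst j; rewrite (bigD1 i) // [X in _ != X](bigD1 i) //=.
  under eq_bigr => k k_i do rewrite (flip_atE flip_s) (flip_atE flip_t) (negbTE k_i).
  under [X in _ != _ + X]eq_bigr => k k_i do
    rewrite (flip_atE flip_s) (flip_atE flip_t) (negbTE k_i).
  by rewrite (flip_atE flip_s) (flip_atE flip_t) eqxx; case: (s i); case: (t i) => /=; lia.
apply/negbTE; rewrite negbK; apply/eqP/eq_bigr => k _.
rewrite (flip_atE flip_s) (flip_atE flip_t).
have [-> | _] := eqVneq k i; first by rewrite (negbTE i_j); case: (s i); case: (t i).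
by case: (k == j); case: (s k); case: (t k).
Qed.

Section TwoEdges.
Variables (s s' t t' : {ffun 'I_n -> bool}) (cs ct : 'I_n).
Hypotheses (flip_s : flip_at s s' cs) (flip_t : flip_at t t' ct).

Let D := [set i | [&& i != cs, i != ct & s i != t i]].

Lemma card_off_flips_le_hamming r u : r \in [:: s; s'] -> u \in [:: t; t'] ->
  #|D| <= hamming r u.
Proof.
move=> r_s u_t; apply/subset_leq_card/subsetP => i; rewrite !inE.
case/and3P=> i_cs i_ct.
by rewrite (mem_flip_pair_off flip_s r_s i_cs) (mem_flip_pair_off flip_t u_t i_ct).
Qed.

Lemma hamming_off_flips_attained :
  exists2 r, r \in [:: s; s'] & exists2 u, u \in [:: t; t'] & hamming r u = #|D|.
Proof.
have [r r_s r_cs] := flip_at_choose (t cs) flip_s.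
have [u u_t u_ct] := flip_at_choose (r ct) flip_t.
exists r => //; exists u => //; apply: eq_card => i; rewrite !inE.
have [-> | i_ct] := eqVneq i ct; first by rewrite u_ct eqxx andbF.
rewrite (mem_flip_pair_off flip_t u_t i_ct).
have [-> | i_cs] := eqVneq i cs; first by rewrite r_cs eqxx.
by rewrite (mem_flip_pair_off flip_s r_s i_cs).
Qed.

Lemma minn_hamming_flip_at :
  minn (minn (hamming s t) (hamming s t')) (minn (hamming s' t) (hamming s' t')) = #|D|.
Proof.
have lb := card_off_flips_le_hamming.
have := lb s t; have := lb s t'; have := lb s' t; have := lb s' t'.
rewrite !inE !eqxx !orbT => /(_ isT isT) ? /(_ isT isT) ? /(_ isT isT) ? /(_ isT isT) ?.
have [r] := hamming_off_flips_attained; rewrite !inE.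
by case/orP=> /eqP -> [u]; rewrite !inE; case/orP=> /eqP ->; lia.
Qed.

End TwoEdges.
End Hypercube.

Section Distance.
Variables (T : finType) (e : rel T).
Implicit Types x y : T.

Lemma walkb0 x y : walkb e x y 0 -> x = y.
Proof. by case/existsP=> p /andP [_ /eqP]; rewrite (tuple0 p). Qed.

Lemma walkbS x y k : walkb e x y k.+1 -> exists2 x', e x x' & walkb e x' y k.
Proof.
case/existsP=> -[[|x' p] //= size_p] /andP [/andP [e_xx' x'_p] last_p].
by exists x' => //; apply/existsP; exists (Tuple size_p); rewrite /= x'_p last_p.
Qed.

Lemma walkb_path x p : path e x p -> walkb e x (last x p) (size p).
Proof. by move=> x_p; apply/existsP; exists (in_tuple p); rewrite /= x_p eqxx. Qed.

Lemma dist_walkb x y : connect e x y -> walkb e x y (dist e x y).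
Proof.
move/connectP=> [p x_p ->]; case/shortenP: x_p => p' x_p' uniq_p' _.
have lt_p' : size p' < #|T|.
  by have := max_card (mem (x :: p')); rewrite (card_uniqP uniq_p').
have has_walk : has (walkb e x (last x p')) (iota 0 #|T|).
  by apply/hasP; exists (size p'); [rewrite mem_iota | exact: walkb_path].
have lt_dist : dist e x (last x p') < #|T|.
  by rewrite /dist -{2}(size_iota 0 #|T|) -has_find.
by have := nth_find 0 has_walk; rewrite nth_iota.
Qed.

Lemma dist_le x y k : walkb e x y k -> dist e x y <= k.
Proof.
move=> walk_k; rewrite leqNgt; apply/negP => lt_k.
have := find_size (walkb e x y) (iota 0 #|T|); rewrite size_iota => le_T.
by have := before_find 0 lt_k; rewrite nth_iota ?(leq_trans lt_k le_T) //= walk_k.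
Qed.

Lemma closer_neighbour x y : connect e x y -> x != y ->
  exists2 x', e x x' & dist e x' y < dist e x y.
Proof.
move/dist_walkb; case: (dist e x y) => [/walkb0 -> | k]; first by rewrite eqxx.
by case/walkbS=> x' e_xx' /dist_le le_k _; exists x'.
Qed.

Lemma dist_edge x y : irreflexive e -> e x y -> dist e x y = 1.
Proof.
move=> e_irr e_xy; have le1 : dist e x y <= 1.
  by apply: dist_le; apply/existsP; exists [tuple y]; rewrite /= e_xy eqxx.
move: (dist_walkb (connect1 e_xy)) le1; case: (dist e x y) => [|[|k]] // /walkb0 x_y.
by rewrite x_y e_irr in e_xy.
Qed.

End Distance.

Section PartialCube.
Variables (T : finType) (e : rel T) (n : nat) (f : T -> {ffun 'I_n -> bool}).
Hypotheses (e_irr : irreflexive e) (e_connected : connected_graph e).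
Hypothesis dist_hamming : forall x y, dist e x y = hamming (f x) (f y).

Lemma edge_flip_at u v : e u v -> exists c, flip_at (f u) (f v) c.
Proof. by move=> e_uv; apply: hamming1_flip_at; rewrite -dist_hamming dist_edge. Qed.

Definition coord_cut i := [set u : T * T | dart e u && (f u.1 i != f u.2 i)].

Definition flipped_coords := [set i | coord_cut i != set0].

Lemma theta_class_coord_cut u c : dart e u -> flip_at (f u.1) (f u.2) c ->
  theta_class e u = coord_cut c.
Proof.
move=> u_dart flip_u; apply/setP => w; rewrite !inE; case w_dart: (dart e w) => //=.
have [c' flip_w] := edge_flip_at w_dart.
by rewrite /theta !dist_hamming (hamming_theta_flip_at flip_u flip_w) flip_w negbK.
Qed.

Lemma theta_classesE : theta_classes e = coord_cut @: flipped_coords.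
Proof.
apply/setP => K; apply/imsetP/imsetP => -[x x_in ->]; rewrite inE in x_in.
  have [c flip_x] := edge_flip_at x_in.
  exists c; last exact: theta_class_coord_cut.
  by rewrite inE; apply/set0Pn; exists x; rewrite inE x_in /= flip_x eqxx.
case/set0Pn: x_in => u; rewrite inE => /andP [u_dart u_x].
have [c flip_u] := edge_flip_at u_dart.
exists u; first by rewrite inE.
by rewrite (theta_class_coord_cut u_dart flip_u) (flip_at_neq flip_u u_x).
Qed.

Lemma coord_cut_inj : {in flipped_coords &, injective coord_cut}.
Proof.
move=> i j; rewrite inE => /set0Pn [u u_i] _ cut_ij.
have : u \in coord_cut j by rewrite -cut_ij.
move: u_i; rewrite !inE => /andP [u_dart u_i] /andP [_ u_j].
have [c flip_u] := edge_flip_at u_dart.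
by rewrite (flip_at_neq flip_u u_i) (flip_at_neq flip_u u_j).
Qed.

Lemma flipped_coords_diff a x i : f a i != f x i -> i \in flipped_coords.
Proof.
have /connectP [p a_p ->] := e_connected a x.
elim: p a a_p => [|y p IHp] a /=; first by rewrite eqxx.
case/andP=> e_ay y_p; have [-> | a_y] := eqVneq (f a i) (f y i); first exact: IHp.
by move=> _; rewrite inE; apply/set0Pn; exists (a, y); rewrite inE /dart e_ay.
Qed.

Lemma remove_coord_cutE i u v :
  remove_edges e (coord_cut i) u v = e u v && (f u i == f v i).
Proof. by rewrite /remove_edges inE /dart /=; case: (e u v); rewrite //= negbK. Qed.

(* A step towards x flips a coordinate at which a and x differ, hence not i. *)
Lemma closer_neighbour_off_cut a x i : a != x -> f a i = f x i ->
  exists2 a', remove_edges e (coord_cut i) a a' & dist e a' x < dist e a x.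
Proof.
move=> a_x a_x_i; have [a' e_aa' closer] := closer_neighbour (e_connected a x) a_x.
have [c flip_c] := edge_flip_at e_aa'.
exists a' => //; rewrite remove_coord_cutE e_aa' (flip_atE flip_c).
have [i_c | _] := eqVneq i c; last by rewrite eqxx.
have := hamming_flip_at (f x) flip_c.
by rewrite -!dist_hamming -i_c a_x_i eqxx => ?; exfalso; lia.
Qed.

Lemma connect_remove_coord_cut i a x :
  connect (remove_edges e (coord_cut i)) a x = (f a i == f x i).
Proof.
apply/idP/eqP.
  case/connectP=> p; elim: p a => [|y p IHp] a /=; first by move=> _ ->.
  by rewrite remove_coord_cutE => /andP [/andP [_ /eqP ->] y_p] /(IHp _ y_p).
move: {2}(dist e a x) (leqnn (dist e a x)) => k.
elim: k a => [|k IHk] a le_k a_x_i; have [-> | a_x] := eqVneq a x; try exact: connect0.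
  by have [a' _ closer] := closer_neighbour_off_cut a_x a_x_i; lia.
have [a' a_a' closer] := closer_neighbour_off_cut a_x a_x_i.
apply: connect_trans (connect1 a_a') (IHk _ _ _); first lia.
by move: a_a'; rewrite remove_coord_cutE => /andP [_ /eqP <-].
Qed.

Section TwoEdges.
Variables (p q : T * T) (cp cq : 'I_n).
Hypotheses (p_dart : dart e p) (q_dart : dart e q).
Hypotheses (flip_p : flip_at (f p.1) (f p.2) cp) (flip_q : flip_at (f q.1) (f q.2) cq).

Lemma delta_coord_cut i :
  delta e (coord_cut i) p q = [&& i != cp, i != cq & f p.1 i != f q.1 i].
Proof.
by rewrite /delta connect_remove_coord_cut !inE p_dart q_dart /= flip_p flip_q !negbK.
Qed.

Lemma sum_delta_coord_cut :
  \sum_(i in flipped_coords) delta e (coord_cut i) p q =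
  #|[set i | [&& i != cp, i != cq & f p.1 i != f q.1 i]]|.
Proof.
rewrite -sum1_card [LHS]big_mkcond [RHS]big_mkcond; apply: eq_bigr => i _.
rewrite delta_coord_cut [i \in [set _ | _]]inE.
case def_i: [&& _, _ & _]; last by case: (i \in _).
by case/and3P: def_i => _ _ /flipped_coords_diff ->.
Qed.

End TwoEdges.
End PartialCube.

Theorem lemma3p2 (T : finType) (e : rel T) :
  simple_graph e -> connected_graph e -> partial_cube e ->
  forall p q : T * T, dart e p -> dart e q ->
    dhat e p q = \sum_(K in theta_classes e) delta e K p q.
Proof.
move=> [e_irr _] e_connected [n [f dist_hamming]] p q p_dart q_dart.
have [cp flip_p] := edge_flip_at e_irr dist_hamming p_dart.
have [cq flip_q] := edge_flip_at e_irr dist_hamming q_dart.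
rewrite (theta_classesE e_irr dist_hamming) big_imset; last exact: coord_cut_inj.
rewrite (sum_delta_coord_cut e_irr e_connected dist_hamming p_dart q_dart flip_p flip_q).
by rewrite /dhat !dist_hamming (minn_hamming_flip_at flip_p flip_q).
Qed.
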